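(* Let $\alpha>0$, $m>-1$, $\alpha>m$, and $0<\lambda<\frac{2(\alpha-m)}{1+m}$. Consider the planar system $$\dot p=p\Big(\tfrac1\lambda(\hat r-a)+2-\lambda p\hat r-q\Big),\qquad \dot q=q(1-\lambda p\hat r-q)+bp\hat r,$$ where $\hat r=\hat r(p,q)=\dfrac{\frac{\alpha-m}{\lambda(1+\alpha)}a-q}{\frac{\alpha-m}{\lambda(1+\alpha)}+\lambda p}$. Let $\underline r=\frac12\min\{1,r_1\}$ and let $T$ be the closed triangle $\{(p,q): p\ge0,\ q\ge0,\ \hat r(p,q)\ge\underline r\}$ (equivalently $p\ge0$, $q\ge0$, $q+\lambda\underline r\,p\le\frac{\alpha-m}{\lambda(1+\alpha)}(a-\underline r)$). Then $T$ is positively invariant, and every trajectory starting in $T\setminus\{(0,0)\}$ converges to the equilibrium $(0,1)$ as $\eta\to+\infty$.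
   Context: Here $n=0$: $D=1+2\alpha-m$, $a=\frac{(2+2\alpha)(1+\lambda)}{D}$, $b=\frac{1+m}{D}+\frac{1+m}{D}\lambda$, $r_1=a-\frac{1+\alpha}{\alpha-m}\lambda>0$. This planar system is the reduced ($n=0$) slow flow of system (S) restricted to the invariant plane $s=\frac{1+m}{1+\alpha}$, where the fast variable $r$ is slaved as $r=\hat r$; the points $(0,0)$ and $(0,1)$ correspond to the equilibria $M_0=(0,0,a,\frac{1+m}{1+\alpha})$ and $M_1=(0,1,r_1,\frac{1+m}{1+\alpha})$. *)

From Stdlib Require Import Reals Lra.
Open Scope R_scope.

Section Sys.
Variables alpha m lambda : R.

Definition Dn : R := 1 + 2 * alpha - m.
Definition acoef : R := (2 + 2 * alpha) * (1 + lambda) / Dn.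
Definition bcoef : R := (1 + m) / Dn + (1 + m) / Dn * lambda.
Definition r1 : R := acoef - (1 + alpha) / (alpha - m) * lambda.

Definition cc : R := (alpha - m) / (lambda * (1 + alpha)).

Definition rhat (p q : R) : R := (cc * acoef - q) / (cc + lambda * p).

Definition fp (p q : R) : R :=
  p * (/ lambda * (rhat p q - acoef) + 2 - lambda * p * rhat p q - q).
Definition fq (p q : R) : R :=
  q * (1 - lambda * p * rhat p q - q) + bcoef * p * rhat p q.

Definition r_low : R := / 2 * Rmin 1 r1.

Definition inT (p q : R) : Prop := 0 <= p /\ 0 <= q /\ r_low <= rhat p q.

(* (p, q) solves the system on [0, tau): continuous from the right at 0,
   differentiable with the prescribed derivative on (0, tau), and
   continuous on [0,tau) (implied inside by differentiability). *)
Definition is_solution_on (tau : R) (p q : R -> R) : Prop :=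
  (forall eps, 0 < eps -> exists delta, 0 < delta /\
     forall t, 0 <= t < delta -> t < tau ->
       Rabs (p t - p 0) < eps /\ Rabs (q t - q 0) < eps) /\
  (forall t, 0 < t < tau ->
     derivable_pt_lim p t (fp (p t) (q t)) /\
     derivable_pt_lim q t (fq (p t) (q t))).

Definition is_global_solution (p q : R -> R) : Prop :=
  (forall eps, 0 < eps -> exists delta, 0 < delta /\
     forall t, 0 <= t < delta ->
       Rabs (p t - p 0) < eps /\ Rabs (q t - q 0) < eps) /\
  (forall t, 0 < t ->
     derivable_pt_lim p t (fp (p t) (q t)) /\
     derivable_pt_lim q t (fq (p t) (q t))).

End Sys.

Definition converges_to (p q : R -> R) (x y : R) : Prop :=
  forall eps, 0 < eps -> exists N, forall t, N <= t ->
    Rabs (p t - x) < eps /\ Rabs (q t - y) < eps.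

(* The sides p = 0, q = 0 and rhat = r_low of the triangle T cannot be crossed: along
   a solution each of p, q and rhat - r_low satisfies h' >= M h wherever it is
   negative.  Inside T the derivative of rhat is
     (c^2 (a - rhat) (r1 - rhat) + p rhat (1 - rhat)) / (c + lambda p),
   and rhat = a only at the origin.  So a trajectory leaving the origin has rhat
   driven below any level above max 1 r1, in particular eventually below the value
   r_star at which p' = fp_rate p (rhat - r_star) changes sign; then p decays
   exponentially, after which (rhat - r1)^2 decreases at a uniform rate until it is
   small.  As q - 1 = c (r1 - rhat) - lambda p rhat, this gives (p, q) -> (0, 1). *)

From Pilot Require Import Defs.
From Stdlib Require Import Reals Lra Psatz Classical.
Open Scope R_scope.

(** * Scalar differential inequalities *)

Definition right_continuous_at (f : R -> R) (x : R) : Prop :=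
  limit1_in f (fun t => x <= t) (f x) x.

Lemma derivable_pt_lim_limit1_in f D x l :
  derivable_pt_lim f x l -> limit1_in f D (f x) x.
Proof.
  intros Hd eps Heps.
  assert (Hc : continuity_pt f x) by (apply derivable_continuous_pt; exists l; exact Hd).
  destruct (Hc eps Heps) as [alp [Ha H]]. exists alp; split; [exact Ha|].
  intros t [_ Ht]. destruct (Req_dec t x) as [->|Hne].
  - simpl. unfold R_dist. rewrite Rminus_diag, Rabs_R0. exact Heps.
  - apply H. split; [split; [exact I|auto]|exact Ht].
Qed.

Lemma derivable_pt_lim_right_continuous f x l :
  derivable_pt_lim f x l -> right_continuous_at f x.
Proof. apply derivable_pt_lim_limit1_in. Qed.

Lemma derivable_pt_lim_exp_scal k t :
  derivable_pt_lim (fun s => exp (k * s)) t (k * exp (k * t)).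
Proof.
  assert (Hlin : derivable_pt_lim (fun s => k * s) t k).
  { pose proof (derivable_pt_lim_mult (fun _ => k) (fun s => s) t 0 1
      (derivable_pt_lim_const k t) (derivable_pt_lim_id t)) as H.
    cbv beta in H. replace (0 * t + k * 1) with k in H by ring. exact H. }
  rewrite Rmult_comm.
  exact (derivable_pt_lim_comp (fun s => k * s) exp t k _ Hlin (derivable_pt_lim_exp (k * t))).
Qed.

Lemma le_of_derivable_nonneg f f' x y : x < y -> right_continuous_at f x ->
  (forall t, x < t <= y -> derivable_pt_lim f t (f' t)) ->
  (forall t, x < t < y -> 0 <= f' t) -> f x <= f y.
Proof.
  intros Hxy Hrc Hd Hpos. destruct (Rle_or_lt (f x) (f y)) as [H|H]; [exact H|].
  exfalso. destruct (Hrc (f x - f y)) as [alp [Ha Hal]]; [lra|].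
  set (t := x + Rmin alp (y - x) / 2).
  pose proof (Rmin_l alp (y - x)). pose proof (Rmin_r alp (y - x)).
  assert (0 < Rmin alp (y - x)) by (apply Rmin_pos; lra).
  assert (Hft : R_dist (f t) (f x) < f x - f y).
  { apply Hal. split; [unfold t; lra|]. simpl. unfold R_dist. rewrite Rabs_right; unfold t; lra. }
  unfold R_dist in Hft. apply Rabs_def2 in Hft.
  destruct (MVT_cor2 f f' t y) as [c [Hc Hc']]; [unfold t; lra| |].
  { intros c Hc. apply Hd. unfold t in Hc. lra. }
  assert (0 <= f' c * (y - t)) by (apply Rmult_le_pos; [apply Hpos; unfold t in *; lra|unfold t; lra]).
  lra.
Qed.

Lemma gronwall_lower h h' k x y : x < y -> right_continuous_at h x ->
  (forall t, x < t <= y -> derivable_pt_lim h t (h' t)) ->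
  (forall t, x < t < y -> k * h t <= h' t) -> h x * exp (k * (y - x)) <= h y.
Proof.
  intros Hxy Hrc Hd Hk.
  assert (Hg : exp (- k * x) * h x <= exp (- k * y) * h y).
  { apply (le_of_derivable_nonneg (fun t => exp (- k * t) * h t)
      (fun t => - k * exp (- k * t) * h t + exp (- k * t) * h' t)); [exact Hxy| | |].
    - apply limit_mul; [|exact Hrc].
      exact (derivable_pt_lim_limit1_in _ _ x _ (derivable_pt_lim_exp_scal (- k) x)).
    - intros t Ht.
      apply (derivable_pt_lim_mult (fun s => exp (- k * s)) h);
        [apply derivable_pt_lim_exp_scal|apply Hd; exact Ht].
    - intros t Ht. pose proof (exp_pos (- k * t)). specialize (Hk t Ht). nra. }
  assert (Hy : exp (k * y) * exp (- k * y) = 1)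
    by (rewrite <- exp_plus; replace (k * y + - k * y) with 0 by ring; apply exp_0).
  assert (Hxy' : exp (k * (y - x)) = exp (k * y) * exp (- k * x))
    by (rewrite <- exp_plus; f_equal; ring).
  pose proof (exp_pos (k * y)).
  rewrite Hxy'.
  replace (h y) with (exp (k * y) * (exp (- k * y) * h y)) by (rewrite <- Rmult_assoc, Hy; ring).
  replace (h x * (exp (k * y) * exp (- k * x))) with (exp (k * y) * (exp (- k * x) * h x)) by ring.
  apply Rmult_le_compat_l; lra.
Qed.

Lemma gronwall_upper h h' k x y : x < y -> right_continuous_at h x ->
  (forall t, x < t <= y -> derivable_pt_lim h t (h' t)) ->
  (forall t, x < t < y -> h' t <= k * h t) -> h y <= h x * exp (k * (y - x)).
Proof.
  intros Hxy Hrc Hd Hk.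
  enough (- h x * exp (k * (y - x)) <= - h y) by lra.
  apply (gronwall_lower (fun t => - h t) (fun t => - h' t)); [exact Hxy| | |].
  - apply limit_Ropp, Hrc.
  - intros t Ht. apply derivable_pt_lim_opp, Hd, Ht.
  - intros t Ht. specialize (Hk t Ht). lra.
Qed.

Lemma nonneg_of_derivable_ge h h' M x y : right_continuous_at h x ->
  (forall t, x < t <= y -> derivable_pt_lim h t (h' t)) -> 0 <= h x ->
  (forall t, x < t < y -> h t < 0 -> M * h t <= h' t) ->
  forall t, x <= t <= y -> 0 <= h t.
Proof.
  intros Hrc Hd H0 HM t Ht.
  destruct (Rle_or_lt 0 (h t)) as [Hp|Hn]; [exact Hp|]. exfalso.
  assert (Hxt : x < t) by (destruct (Req_dec x t) as [->|]; lra).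
  (* [t0] is the last time in [x, t] at which [h] is nonnegative *)
  destruct (completeness (fun s => x <= s <= t /\ 0 <= h s)) as [t0 [Hub Hlub]].
  { exists t. intros s [Hs _]. lra. }
  { exists x. split; [lra|exact H0]. }
  assert (Hxt0 : x <= t0) by (apply Hub; split; [lra|exact H0]).
  assert (Ht0t : t0 <= t) by (apply Hlub; intros s [Hs _]; lra).
  assert (Hneg : forall s, t0 < s <= t -> h s < 0).
  { intros s Hs. destruct (Rle_or_lt 0 (h s)) as [Hq|Hq]; [|exact Hq].
    assert (s <= t0) by (apply Hub; split; [lra|exact Hq]). lra. }
  assert (Ht0 : 0 <= h t0).
  { destruct (Req_dec t0 x) as [->|Hne]; [exact H0|].
    destruct (Rle_or_lt 0 (h t0)) as [Hq|Hq]; [exact Hq|]. exfalso.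
    destruct (derivable_pt_lim_limit1_in h (fun _ => True) t0 (h' t0) ltac:(apply Hd; lra)
      (- h t0)) as [alp [Ha Hal]]; [lra|].
    assert (t0 <= t0 - alp); [|lra].
    apply Hlub. intros s [Hs Hs'].
    destruct (Rle_or_lt s (t0 - alp)) as [Hr|Hr]; [exact Hr|]. exfalso.
    assert (s <= t0) by (apply Hub; split; assumption).
    assert (Hdist : R_dist (h s) (h t0) < - h t0).
    { apply Hal. split; [exact I|]. simpl. unfold R_dist. apply Rabs_def1; lra. }
    unfold R_dist in Hdist. apply Rabs_def2 in Hdist. lra. }
  assert (Hlt : t0 < t) by (destruct (Req_dec t0 t) as [->|]; lra).
  assert (Hg : h t0 * exp (M * (t - t0)) <= h t).
  { apply (gronwall_lower h h'); [exact Hlt| | |].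
    - destruct (Req_dec t0 x) as [->|Hne]; [exact Hrc|].
      eapply derivable_pt_lim_right_continuous, Hd. lra.
    - intros u Hu. apply Hd. lra.
    - intros u Hu. apply HM; [lra|]. apply Hneg. lra. }
  pose proof (exp_pos (M * (t - t0))). nra.
Qed.

Lemma ge_of_limit1_in_left f a x L : a < x -> limit1_in f (fun _ => True) (f x) x ->
  (forall u, a <= u < x -> L <= f u) -> L <= f x.
Proof.
  intros Hax Hl Hu. destruct (Rle_or_lt L (f x)) as [H|H]; [exact H|]. exfalso.
  destruct (Hl (L - f x)) as [alp [Ha Hal]]; [lra|].
  set (u := x - Rmin alp (x - a) / 2).
  pose proof (Rmin_l alp (x - a)). pose proof (Rmin_r alp (x - a)).
  assert (0 < Rmin alp (x - a)) by (apply Rmin_pos; lra).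
  assert (Hdist : R_dist (f u) (f x) < L - f x).
  { apply Hal. split; [exact I|]. simpl. unfold R_dist, u. apply Rabs_def1; lra. }
  unfold R_dist in Hdist. apply Rabs_def2 in Hdist.
  assert (L <= f u) by (apply Hu; unfold u; lra). lra.
Qed.

Definition near_right (x : R) (P : R -> Prop) : Prop :=
  exists d, 0 < d /\ forall s, x <= s < x + d -> P s.

Lemma near_right_and x (P Q : R -> Prop) :
  near_right x P -> near_right x Q -> near_right x (fun s => P s /\ Q s).
Proof.
  intros [d1 [Hd1 H1]] [d2 [Hd2 H2]]. exists (Rmin d1 d2).
  split; [apply Rmin_pos; assumption|]. intros s Hs.
  pose proof (Rmin_l d1 d2). pose proof (Rmin_r d1 d2).
  split; [apply H1|apply H2]; lra.
Qed.

Lemma near_right_lt f x L : right_continuous_at f x -> f x < L -> near_right x (fun s => f s < L).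
Proof.
  intros Hf HL. destruct (Hf (L - f x)) as [d [Hd Hnear]]; [lra|].
  exists d. split; [exact Hd|]. intros s Hs.
  assert (Hdist : R_dist (f s) (f x) < L - f x).
  { apply Hnear. split; [lra|]. simpl. unfold R_dist. apply Rabs_def1; lra. }
  unfold R_dist in Hdist. apply Rabs_def2 in Hdist. lra.
Qed.

Lemma near_right_gt f x L : right_continuous_at f x -> L < f x -> near_right x (fun s => L < f s).
Proof.
  intros Hf HL. destruct (near_right_lt (fun s => - f s) x (- L)) as [d [Hd H]].
  - apply limit_Ropp, Hf.
  - lra.
  - exists d. split; [exact Hd|]. intros s Hs. specialize (H s Hs). simpl in H. lra.
Qed.

Lemma real_induction (P : R -> Prop) a b :
  P a ->
  (forall s, a < s <= b -> (forall u, a <= u < s -> P u) -> P s) ->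
  (forall s, a <= s < b -> (forall u, a <= u <= s -> P u) -> near_right s (fun u => u <= b -> P u)) ->
  forall t, a <= t <= b -> P t.
Proof.
  intros Ha Hclosed Hopen t Ht.
  destruct (completeness (fun s => a <= s <= b /\ forall u, a <= u <= s -> P u))
    as [ts [Hub Hlub]].
  { exists b. intros s [Hs _]. lra. }
  { exists a. split; [lra|]. intros u Hu. replace u with a by lra. exact Ha. }
  assert (Hats : a <= ts) by (apply Hub; split; [lra|]; intros u Hu; replace u with a by lra; exact Ha).
  assert (Htsb : ts <= b) by (apply Hlub; intros s [Hs _]; lra).
  assert (Hbefore : forall u, a <= u < ts -> P u).
  { intros u Hu.
    destruct (classic (exists s, (a <= s <= b /\ forall v, a <= v <= s -> P v) /\ u < s))
      as [[s [[_ Hs] Hus]]|Hno]; [apply Hs; lra|].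
    exfalso. assert (ts <= u); [|lra].
    apply Hlub. intros s Hs. destruct (Rle_or_lt s u) as [Hl|Hl]; [exact Hl|].
    exfalso. apply Hno. exists s. split; assumption. }
  assert (Hupto : forall u, a <= u <= ts -> P u).
  { intros u Hu. destruct (Rlt_or_le u ts) as [Hl|Hl]; [apply Hbefore; lra|].
    replace u with ts by lra.
    destruct (Req_dec ts a) as [->|Hne]; [exact Ha|]. apply Hclosed; [lra|exact Hbefore]. }
  destruct (Req_dec ts b) as [Eb|Hne]; [apply Hupto; lra|].
  exfalso. destruct (Hopen ts ltac:(lra) Hupto) as [d [Hd Hloc]].
  set (s := Rmin (ts + d / 2) b).
  assert (s <= ts + d / 2) by apply Rmin_l. assert (s <= b) by apply Rmin_r.
  assert (ts < s) by (apply Rmin_glb_lt; lra).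
  assert (s <= ts); [|lra].
  apply Hub. split; [lra|]. intros u Hu.
  destruct (Rle_or_lt u ts) as [Hl|Hl]; [apply Hupto; lra|]. apply Hloc; lra.
Qed.

Lemma stays_le V V' eps s : (forall t, s <= t -> derivable_pt_lim V t (V' t)) ->
  V s <= eps -> (forall t, s <= t -> eps < V t -> V' t <= 0) ->
  forall t, s <= t -> V t <= eps.
Proof.
  intros Hd Hs HV t Ht.
  assert (Hdiff : forall u, s <= u -> derivable_pt_lim (fun z => eps - V z) u (0 - V' u))
    by (intros u Hu; apply derivable_pt_lim_minus; [apply derivable_pt_lim_const|apply Hd, Hu]).
  enough (0 <= eps - V t) by lra.
  apply (nonneg_of_derivable_ge (fun z => eps - V z) (fun z => 0 - V' z) 0 s t).
  - eapply derivable_pt_lim_right_continuous, Hdiff. lra.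
  - intros u Hu. apply Hdiff. lra.
  - lra.
  - intros u Hu Hneg. assert (V' u <= 0) by (apply HV; lra). lra.
  - lra.
Qed.

Lemma eventually_le_of_derivable V V' eps d T : 0 < d ->
  (forall t, T <= t -> derivable_pt_lim V t (V' t)) ->
  (forall t, T <= t -> 0 <= V t) -> (forall t, T <= t -> eps < V t -> V' t <= - d) ->
  exists T', T <= T' /\ forall t, T' <= t -> V t <= eps.
Proof.
  intros Hd HD H0 HV.
  (* [V] decreases at rate [d] while above [eps], so it drops below [eps] before [T + L] *)
  set (L := V T / d + 1).
  assert (HL : 0 < L) by (unfold L; pose proof (H0 T (Rle_refl T));
    assert (0 <= V T / d) by (apply Rle_mult_inv_pos; lra); lra).
  destruct (classic (exists s, T <= s <= T + L /\ V s <= eps)) as [[s [Hs Hs']]|Hno].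
  - exists s. split; [lra|]. apply (stays_le V V'); [intros; apply HD; lra|exact Hs'|].
    intros t Ht Hlt. assert (V' t <= - d) by (apply HV; lra). lra.
  - exfalso.
    assert (Habove : forall s, T <= s <= T + L -> eps < V s).
    { intros s Hs. destruct (Rle_or_lt (V s) eps) as [H|H]; [|exact H].
      exfalso. apply Hno. exists s. split; assumption. }
    assert (Hdiff : forall u, T <= u ->
      derivable_pt_lim (fun z => - V z - d * z) u (- V' u - (0 * u + d * 1))).
    { intros u Hu. apply derivable_pt_lim_minus.
      - apply derivable_pt_lim_opp, HD, Hu.
      - apply (derivable_pt_lim_mult (fun _ => d) (fun z => z));
          [apply derivable_pt_lim_const|apply derivable_pt_lim_id]. }
    assert (Hmono : - V T - d * T <= - V (T + L) - d * (T + L)).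
    { apply (le_of_derivable_nonneg (fun z => - V z - d * z) (fun u => - V' u - (0 * u + d * 1))); [lra| | |].
      - eapply derivable_pt_lim_right_continuous, Hdiff. lra.
      - intros u Hu. apply Hdiff. lra.
      - intros u Hu. assert (V' u <= - d) by (apply HV; [lra|apply Habove; lra]). lra. }
    assert (0 <= V (T + L)) by (apply H0; lra).
    assert (d * L = V T + d) by (unfold L; field; lra).
    lra.
Qed.

Lemma unbounded_of_derivable_ge h h' k x B : 0 < k -> 0 < h x ->
  (forall t, x <= t -> derivable_pt_lim h t (h' t)) ->
  (forall t, x < t -> k * h t <= h' t) -> exists t, x <= t /\ B < h t.
Proof.
  intros Hk Hx Hd Hge.
  set (y := x + Rabs B / (k * h x) + 1).
  assert (Hy : x + 1 <= y)
    by (unfold y; assert (0 <= Rabs B / (k * h x)) by (apply Rle_mult_inv_pos; [apply Rabs_pos|nra]); lra).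
  exists y. split; [lra|].
  assert (Hg : h x * exp (k * (y - x)) <= h y).
  { apply (gronwall_lower h h'); [lra| | |].
    - eapply derivable_pt_lim_right_continuous, Hd. lra.
    - intros t Ht. apply Hd. lra.
    - intros t Ht. apply Hge. lra. }
  pose proof (exp_ineq1_le (k * (y - x))).
  assert (Hlin : h x * (1 + k * (y - x)) = h x + Rabs B + k * h x)
    by (unfold y; field; lra).
  assert (h x * (1 + k * (y - x)) <= h x * exp (k * (y - x))) by (apply Rmult_le_compat_l; lra).
  pose proof (Rle_abs B). nra.
Qed.
Lemma exp_decay_eventually_le C mu eta T : 0 <= C -> 0 < mu -> 0 < eta ->
  exists T', T <= T' /\ forall t, T' <= t -> C * exp (- mu * (t - T)) <= eta.
Proof.
  intros HC Hmu Heta. exists (T + C / (mu * eta)).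
  assert (HCme : mu * (C / (mu * eta)) = C / eta) by (field; lra).
  assert (0 <= C / (mu * eta)) by (apply Rle_mult_inv_pos; nra).
  split; [lra|]. intros t Ht.
  assert (Hlin : C <= eta * (1 + mu * (t - T))).
  { assert (C / eta <= mu * (t - T)) by (rewrite <- HCme; apply Rmult_le_compat_l; lra).
    assert (eta * (C / eta) = C) by (field; lra). nra. }
  pose proof (exp_ineq1_le (mu * (t - T))).
  assert (Hinv : exp (mu * (t - T)) * exp (- mu * (t - T)) = 1)
    by (rewrite <- exp_plus; replace (mu * (t - T) + - mu * (t - T)) with 0 by ring; apply exp_0).
  assert (Hexp : C <= eta * exp (mu * (t - T)))
    by (apply Rle_trans with (eta * (1 + mu * (t - T))); [exact Hlin|apply Rmult_le_compat_l; lra]).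
  apply Rmult_le_compat_r with (r := exp (- mu * (t - T))) in Hexp; [|left; apply exp_pos].
  rewrite Rmult_assoc, Hinv, Rmult_1_r in Hexp. exact Hexp.
Qed.

(** * The planar system *)

Section Triangle.
Variables alpha m lambda : R.
Hypothesis Halpha : 0 < alpha.
Hypothesis Hm : -1 < m.
Hypothesis Hmalpha : m < alpha.
Hypothesis Hlambda : 0 < lambda.
Hypothesis Hlambda_lt : lambda < 2 * (alpha - m) / (1 + m).

Local Notation c := (cc alpha m lambda).
Local Notation a := (acoef alpha m lambda).
Local Notation b := (bcoef alpha m lambda).
Local Notation r1 := (Defs.r1 alpha m lambda).
Local Notation rh := (rhat alpha m lambda).
Local Notation rl := (r_low alpha m lambda).

Lemma Dn_pos : 0 < Dn alpha m.
Proof. unfold Dn. lra. Qed.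

Lemma cc_pos : 0 < c.
Proof. unfold cc. apply Rdiv_lt_0_compat; nra. Qed.

Lemma cc_lambda_bounds : 0 < c * lambda < 1.
Proof.
  replace (c * lambda) with ((alpha - m) / (1 + alpha)) by (unfold cc; field; lra).
  split; [apply Rdiv_lt_0_compat; lra|].
  apply Rmult_lt_reg_r with (1 + alpha); [lra|]. field_simplify; lra.
Qed.

Lemma acoef_eq : a = 1 + lambda + b.
Proof. pose proof Dn_pos. unfold acoef, bcoef. unfold Dn in *. field. lra. Qed.

Lemma bcoef_pos : 0 < b.
Proof.
  pose proof Dn_pos. unfold bcoef.
  assert (0 < (1 + m) / Dn alpha m) by (apply Rdiv_lt_0_compat; lra). nra.
Qed.

Lemma acoef_pos : 0 < a.
Proof. rewrite acoef_eq. pose proof bcoef_pos. lra. Qed.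

Lemma r1_eq : r1 = a - / c.
Proof. unfold Defs.r1, cc. field. lra. Qed.

Lemma r1_lt_acoef : r1 < a.
Proof. rewrite r1_eq. pose proof (Rinv_0_lt_compat _ cc_pos). lra. Qed.

(* the hypothesis on [lambda] is exactly [r1 > 0] *)
Lemma r1_pos : 0 < r1.
Proof.
  pose proof Dn_pos.
  assert (E : r1 * (Dn alpha m * (alpha - m)) = (1 + alpha) * (2 * (alpha - m) - lambda * (1 + m)))
    by (unfold Defs.r1, acoef; unfold Dn in *; field; lra).
  assert (lambda * (1 + m) < 2 * (alpha - m)).
  { apply Rmult_lt_compat_r with (r := 1 + m) in Hlambda_lt; [|lra].
    unfold Rdiv in Hlambda_lt. rewrite Rmult_assoc, Rinv_l in Hlambda_lt; lra. }
  assert (0 < Dn alpha m * (alpha - m)) by nra.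
  nra.
Qed.

Lemma r_low_bounds : 0 < rl /\ 2 * rl <= 1 /\ 2 * rl <= r1.
Proof.
  pose proof r1_pos. unfold r_low.
  pose proof (Rmin_l 1 r1). pose proof (Rmin_r 1 r1).
  assert (0 < Rmin 1 r1) by (apply Rmin_pos; lra). lra.
Qed.

Definition r_star : R := a - 2 * lambda / (1 + c * lambda).
Definition fp_rate : R := (1 + c * lambda) / lambda.

Lemma one_lt_r_star : 1 < r_star.
Proof.
  pose proof Dn_pos. pose proof cc_lambda_bounds.
  assert (E : r_star - 1 = (1 + m) / Dn alpha m).
  { unfold r_star. replace (c * lambda) with ((alpha - m) / (1 + alpha)) by (unfold cc; field; lra).
    unfold acoef, Dn in *. field. lra. }
  assert (0 < (1 + m) / Dn alpha m) by (apply Rdiv_lt_0_compat; lra). lra.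
Qed.

Lemma r1_lt_r_star : r1 < r_star.
Proof.
  pose proof cc_lambda_bounds. pose proof cc_pos. rewrite r1_eq.
  assert (E : (r_star - (a - / c)) * (c * (1 + c * lambda)) = 1 - c * lambda)
    by (unfold r_star; field; lra).
  assert (0 < c * (1 + c * lambda)) by nra. nra.
Qed.

Lemma r_star_lt_acoef : r_star < a.
Proof.
  pose proof cc_lambda_bounds. unfold r_star.
  assert (0 < 2 * lambda / (1 + c * lambda)) by (apply Rdiv_lt_0_compat; lra). lra.
Qed.

Lemma fp_rate_pos : 0 < fp_rate.
Proof. pose proof cc_lambda_bounds. unfold fp_rate. apply Rdiv_lt_0_compat; lra. Qed.

Lemma fp_eq P Q : c + lambda * P <> 0 ->
  fp alpha m lambda P Q = fp_rate * P * (rh P Q - r_star).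
Proof.
  intros Hn. pose proof cc_lambda_bounds.
  unfold fp, fp_rate, r_star, rhat. field. repeat split; lra.
Qed.

Lemma q_eq P Q : c + lambda * P <> 0 -> Q = c * a - rh P Q * (c + lambda * P).
Proof. intros Hn. unfold rhat. field. exact Hn. Qed.

Lemma q_sub_1_eq P Q : c + lambda * P <> 0 ->
  Q - 1 = c * (r1 - rh P Q) - lambda * P * rh P Q.
Proof.
  intros Hn. pose proof cc_pos. rewrite (q_eq P Q Hn) at 1. rewrite r1_eq. field. lra.
Qed.

Definition rhat_dot (P Q : R) : R :=
  (c ^ 2 * (a - rh P Q) * (r1 - rh P Q) + P * rh P Q * (1 - rh P Q)) / (c + lambda * P).

Lemma derivable_pt_lim_rhat (p q : R -> R) t :
  derivable_pt_lim p t (fp alpha m lambda (p t) (q t)) ->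
  derivable_pt_lim q t (fq alpha m lambda (p t) (q t)) ->
  c + lambda * p t <> 0 ->
  derivable_pt_lim (fun s => rh (p s) (q s)) t (rhat_dot (p t) (q t)).
Proof.
  intros Hp Hq Hn.
  set (fp_t := fp alpha m lambda (p t) (q t)). set (fq_t := fq alpha m lambda (p t) (q t)).
  assert (E : rhat_dot (p t) (q t) =
    ((0 - fq_t) * (c + lambda * p t) - (0 + (0 * p t + lambda * fp_t)) * (c * a - q t))
      / (c + lambda * p t)²).
  { pose proof cc_pos. unfold fp_t, fq_t, rhat_dot, fp, fq.
    rewrite r1_eq. unfold rhat. rewrite acoef_eq. unfold Rsqr. field. lra. }
  rewrite E. unfold rhat.
  apply (derivable_pt_lim_div (fun s => c * a - q s) (fun s => c + lambda * p s)); [| |exact Hn].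
  - apply derivable_pt_lim_minus; [apply derivable_pt_lim_const|exact Hq].
  - apply derivable_pt_lim_plus; [apply derivable_pt_lim_const|].
    apply (derivable_pt_lim_mult (fun _ => lambda) p); [apply derivable_pt_lim_const|exact Hp].
Qed.

Lemma limit1_in_rhat (p q : R -> R) D x :
  limit1_in p D (p x) x -> limit1_in q D (q x) x -> c + lambda * p x <> 0 ->
  limit1_in (fun t => rh (p t) (q t)) D (rh (p x) (q x)) x.
Proof.
  intros Hp Hq Hn. unfold rhat, Rdiv.
  apply (limit_mul (fun t => c * a - q t) (fun t => / (c + lambda * p t))).
  - apply (limit_minus (fun _ => c * a) q); [exact (limit_free (fun _ => c * a) D x x)|exact Hq].
  - apply (limit_inv (fun t => c + lambda * p t)); [|exact Hn].
    apply (limit_plus (fun _ => c) (fun t => lambda * p t)); [exact (limit_free (fun _ => c) D x x)|].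
    apply (limit_mul (fun _ => lambda) p); [exact (limit_free (fun _ => lambda) D x x)|exact Hp].
Qed.

Definition Pmax : R := c * a / (lambda * rl).

Lemma Pmax_nonneg : 0 <= Pmax.
Proof.
  pose proof cc_pos. pose proof acoef_pos. pose proof r_low_bounds as (Hrl & _).
  left. unfold Pmax. apply Rdiv_lt_0_compat; nra.
Qed.

Lemma denom_pos P : 0 <= P -> 0 < c + lambda * P.
Proof. intros HP. pose proof cc_pos. nra. Qed.

Lemma denom_neq0 P : 0 <= P -> c + lambda * P <> 0.
Proof. intros HP. apply Rgt_not_eq, denom_pos, HP. Qed.

Lemma inT_bounds P Q : inT alpha m lambda P Q ->
  0 <= P /\ 0 <= Q /\ rl <= rh P Q /\ rh P Q <= a /\ P <= Pmax.
Proof.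
  intros (HP & HQ & HR). pose proof r_low_bounds as (L1 & _). pose proof cc_pos.
  pose proof (denom_pos P HP).
  pose proof (q_eq P Q (denom_neq0 P HP)) as E.
  assert (0 <= rh P Q * (lambda * P)) by (apply Rmult_le_pos; nra).
  assert (rh P Q <= a) by nra.
  assert (lambda * P * rl <= c * a) by nra.
  repeat split; try assumption.
  unfold Pmax. apply Rmult_le_reg_r with (lambda * rl); [nra|].
  unfold Rdiv. rewrite Rmult_assoc, Rinv_l; nra.
Qed.

Definition fp_factor (P Q : R) : R := / lambda * (rh P Q - a) + 2 - lambda * P * rh P Q - Q.
Definition fq_factor (P Q : R) : R := 1 - lambda * P * rh P Q - Q.

Lemma right_continuous_factors p q x :
  right_continuous_at p x -> right_continuous_at q x -> c + lambda * p x <> 0 ->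
  right_continuous_at (fun s => fp_factor (p s) (q s)) x /\
  right_continuous_at (fun s => fq_factor (p s) (q s)) x.
Proof.
  intros Hp Hq Hn. unfold right_continuous_at in *.
  set (D := fun t => x <= t) in *.
  pose proof (limit1_in_rhat p q D x Hp Hq Hn) as Hr.
  assert (Hconst : forall k, limit1_in (fun _ => k) D k x) by (intro k; exact (limit_free (fun _ => k) D x x)).
  assert (HpR : limit1_in (fun s => lambda * p s * rh (p s) (q s)) D (lambda * p x * rh (p x) (q x)) x).
  { apply (limit_mul (fun s => lambda * p s)); [|exact Hr].
    apply (limit_mul (fun _ => lambda) p); [apply Hconst|exact Hp]. }
  unfold fp_factor, fq_factor. split.
  - apply (limit_minus _ q); [|exact Hq]. apply limit_minus; [|exact HpR].
    apply limit_plus; [|apply Hconst].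
    apply (limit_mul (fun _ => / lambda)); [apply Hconst|].
    apply limit_minus; [exact Hr|apply Hconst].
  - apply (limit_minus _ q); [|exact Hq]. apply limit_minus; [apply Hconst|exact HpR].
Qed.

Lemma rhat_dot_nonneg P Q : 0 <= P -> 0 < rh P Q -> rh P Q <= 1 -> rh P Q <= r1 ->
  0 <= rhat_dot P Q.
Proof.
  intros HP H0 H1 Hr1. pose proof r1_lt_acoef. pose proof (denom_pos P HP).
  unfold rhat_dot. apply Rle_mult_inv_pos; [|assumption].
  assert (0 <= c ^ 2 * (a - rh P Q) * (r1 - rh P Q))
    by (apply Rmult_le_pos; [apply Rmult_le_pos; [apply pow2_ge_0|]|]; lra).
  assert (0 <= P * rh P Q * (1 - rh P Q)) by (apply Rmult_le_pos; [apply Rmult_le_pos|]; lra).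
  lra.
Qed.

Lemma near_right_factors_bounded p q x :
  right_continuous_at p x -> right_continuous_at q x -> inT alpha m lambda (p x) (q x) ->
  exists Mp Mq, near_right x (fun s =>
    fp_factor (p s) (q s) < Mp /\ fq_factor (p s) (q s) < Mq /\ 0 < rh (p s) (q s)).
Proof.
  intros Hp Hq HT. destruct (inT_bounds _ _ HT) as (P0 & _ & R0 & _).
  pose proof r_low_bounds as (L1 & _).
  destruct (right_continuous_factors p q x Hp Hq (denom_neq0 _ P0)) as [Hf Hg].
  assert (Hr : right_continuous_at (fun s => rh (p s) (q s)) x)
    by (apply limit1_in_rhat; [exact Hp|exact Hq|apply denom_neq0, P0]).
  exists (fp_factor (p x) (q x) + 1), (fq_factor (p x) (q x) + 1).
  apply near_right_and; [apply near_right_lt; [exact Hf|lra]|].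
  apply near_right_and; [apply near_right_lt; [exact Hg|lra]|].
  apply near_right_gt; [exact Hr|lra].
Qed.

Lemma locally_invariant p q x tau : x < tau ->
  (forall t, x < t < tau -> derivable_pt_lim p t (fp alpha m lambda (p t) (q t)) /\
                            derivable_pt_lim q t (fq alpha m lambda (p t) (q t))) ->
  right_continuous_at p x -> right_continuous_at q x -> inT alpha m lambda (p x) (q x) ->
  near_right x (fun u => u < tau -> inT alpha m lambda (p u) (q u)).
Proof.
  intros Hxt Hd Hp Hq HT.
  destruct (inT_bounds _ _ HT) as (P0 & Q0 & R0 & _).
  pose proof r_low_bounds as (L1 & L2 & L3). pose proof bcoef_pos.
  destruct (near_right_factors_bounded p q x Hp Hq HT) as (Mp & Mq & d & Hd0 & Hbd).
  exists d. split; [exact Hd0|]. intros u Hu Hut.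
  assert (Hder : forall s, x < s <= u -> derivable_pt_lim p s (fp alpha m lambda (p s) (q s)) /\
                                       derivable_pt_lim q s (fq alpha m lambda (p s) (q s)))
    by (intros; apply Hd; lra).
  assert (Hpn : forall s, x <= s <= u -> 0 <= p s).
  { apply (nonneg_of_derivable_ge p (fun s => fp alpha m lambda (p s) (q s)) Mp x u Hp);
      [intros; apply Hder; lra|exact P0|].
    intros s Hs Hneg. change (fp alpha m lambda (p s) (q s)) with (p s * fp_factor (p s) (q s)).
    destruct (Hbd s ltac:(lra)) as (Hfs & _). nra. }
  assert (Hqn : forall s, x <= s <= u -> 0 <= q s).
  { apply (nonneg_of_derivable_ge q (fun s => fq alpha m lambda (p s) (q s)) Mq x u Hq);
      [intros; apply Hder; lra|exact Q0|].
    intros s Hs Hneg.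
    change (fq alpha m lambda (p s) (q s)) with (q s * fq_factor (p s) (q s) + b * p s * rh (p s) (q s)).
    destruct (Hbd s ltac:(lra)) as (_ & Hgs & Hrs).
    assert (0 <= b * p s * rh (p s) (q s))
      by (apply Rmult_le_pos; [apply Rmult_le_pos; [lra|apply Hpn; lra]|lra]).
    nra. }
  assert (Hrn : forall s, x <= s <= u -> 0 <= rh (p s) (q s) - rl).
  { apply (nonneg_of_derivable_ge (fun s => rh (p s) (q s) - rl) (fun s => rhat_dot (p s) (q s) - 0) 0 x u).
    - apply limit_minus; [|exact (limit_free (fun _ => rl) _ x x)].
      apply limit1_in_rhat; [exact Hp|exact Hq|apply denom_neq0, P0].
    - intros s Hs. apply derivable_pt_lim_minus; [|apply derivable_pt_lim_const].
      apply derivable_pt_lim_rhat; [apply Hder; lra|apply Hder; lra|].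
      apply denom_neq0, Hpn. lra.
    - lra.
    - intros s Hs Hneg. destruct (Hbd s ltac:(lra)) as (_ & _ & Hrs).
      assert (0 <= rhat_dot (p s) (q s)) by (apply rhat_dot_nonneg; [apply Hpn| | |]; lra). lra. }
  split; [apply Hpn; lra|]. split; [apply Hqn; lra|].
  pose proof (Hrn u ltac:(lra)). lra.
Qed.

Lemma solution_right_continuous_0 tau p q : 0 < tau ->
  is_solution_on alpha m lambda tau p q -> right_continuous_at p 0 /\ right_continuous_at q 0.
Proof.
  intros Htau [Hic _].
  split; intros eps Heps; destruct (Hic eps Heps) as [d [Hd Hnear]];
    exists (Rmin d tau); (split; [apply Rmin_pos; lra|]);
    intros s [Hs Hsd]; simpl in *; unfold R_dist in *;
    rewrite Rminus_0_r, Rabs_right in Hsd by lra;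
    pose proof (Rmin_l d tau); pose proof (Rmin_r d tau);
    apply Hnear; lra.
Qed.

Lemma T_invariant tau p q : is_solution_on alpha m lambda tau p q ->
  inT alpha m lambda (p 0) (q 0) -> forall t, 0 <= t < tau -> inT alpha m lambda (p t) (q t).
Proof.
  intros Hsol H0 t Ht.
  destruct (solution_right_continuous_0 tau p q ltac:(lra) Hsol) as [Hp0 Hq0].
  destruct Hsol as [_ Hder].
  assert (Hcont : forall s, 0 < s < tau ->
            limit1_in p (fun _ => True) (p s) s /\ limit1_in q (fun _ => True) (q s) s)
    by (intros s Hs; split; eapply derivable_pt_lim_limit1_in, Hder, Hs).
  apply (real_induction (fun u => inT alpha m lambda (p u) (q u)) 0 t); [exact H0| | |lra].
  - intros s Hs Hbefore. destruct (Hcont s ltac:(lra)) as [Hp Hq].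
    assert (Hps : 0 <= p s)
      by (apply (ge_of_limit1_in_left p 0); [lra|exact Hp|intros u Hu; apply (inT_bounds _ _ (Hbefore u Hu))]).
    assert (Hqs : 0 <= q s)
      by (apply (ge_of_limit1_in_left q 0); [lra|exact Hq|intros u Hu; apply (inT_bounds _ _ (Hbefore u Hu))]).
    split; [exact Hps|]. split; [exact Hqs|].
    apply (ge_of_limit1_in_left (fun u => rh (p u) (q u)) 0); [lra| |].
    + apply limit1_in_rhat; [exact Hp|exact Hq|apply denom_neq0, Hps].
    + intros u Hu. apply (inT_bounds _ _ (Hbefore u Hu)).
  - intros s Hs Hupto.
    destruct (locally_invariant p q s tau ltac:(lra)) as [d [Hd Hloc]].
    + intros u Hu. apply Hder. lra.
    + destruct (Req_dec s 0) as [->|Hne]; [exact Hp0|].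
      eapply derivable_pt_lim_right_continuous, Hder. lra.
    + destruct (Req_dec s 0) as [->|Hne]; [exact Hq0|].
      eapply derivable_pt_lim_right_continuous, Hder. lra.
    + apply Hupto. lra.
    + exists d. split; [exact Hd|]. intros u Hu Hub. apply Hloc; lra.
Qed.

Lemma rhat_dot_nonpos P Q : 0 <= P -> 1 <= rh P Q -> r1 <= rh P Q -> rh P Q <= a ->
  rhat_dot P Q <= 0.
Proof.
  intros HP H1 Hr1 Ha. pose proof (denom_pos P HP).
  assert (0 <= c ^ 2 * (a - rh P Q) * (rh P Q - r1))
    by (apply Rmult_le_pos; [apply Rmult_le_pos; [apply pow2_ge_0|]|]; lra).
  assert (0 <= P * rh P Q * (rh P Q - 1)) by (apply Rmult_le_pos; [apply Rmult_le_pos|]; lra).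
  unfold rhat_dot, Rdiv. rewrite <- (Rmult_0_l (/ (c + lambda * P))).
  apply Rmult_le_compat_r; [left; apply Rinv_0_lt_compat; assumption|lra].
Qed.

(* above [rp > max 1 r1], [a - rhat] grows at least exponentially *)
Lemma rhat_dot_le P Q rp : 0 <= P <= Pmax -> 1 <= rp -> r1 < rp -> rp <= rh P Q <= a ->
  c ^ 2 * (rp - r1) / (c + lambda * Pmax) * (a - rh P Q) <= - rhat_dot P Q.
Proof.
  intros HP H1 Hr1 Hrp. pose proof (denom_pos P (proj1 HP)).
  set (R := rh P Q) in *.
  set (N := c ^ 2 * (a - R) * (R - r1) + P * R * (R - 1)).
  assert (HN : c ^ 2 * (rp - r1) * (a - R) <= N).
  { assert (0 <= P * R * (R - 1)) by (apply Rmult_le_pos; [apply Rmult_le_pos|]; lra).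
    assert (0 <= c ^ 2 * ((a - R) * (R - rp))) by (apply Rmult_le_pos; [apply pow2_ge_0|nra]).
    unfold N. nra. }
  assert (0 <= c ^ 2 * (rp - r1) * (a - R))
    by (apply Rmult_le_pos; [apply Rmult_le_pos; [apply pow2_ge_0|]|]; lra).
  replace (- rhat_dot P Q) with (N / (c + lambda * P)) by (unfold rhat_dot, N; fold R; field; lra).
  replace (c ^ 2 * (rp - r1) / (c + lambda * Pmax) * (a - R))
    with (c ^ 2 * (rp - r1) * (a - R) / (c + lambda * Pmax)) by (field; nra).
  unfold Rdiv. apply Rmult_le_compat; [lra|left; apply Rinv_0_lt_compat; nra|exact HN|].
  apply Rinv_le_contravar; nra.
Qed.

(* Lyapunov estimate for [(rhat - r1)^2] once [p] is small *)
Lemma rhat_dist_r1_deriv_le P Q rp eps : 0 <= P <= Pmax -> 0 < rh P Q <= rp -> rp < a -> 0 < eps ->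
  2 * a ^ 2 * (1 + a) * P <= c ^ 2 * (a - rp) * eps ->
  eps < (rh P Q - r1)² ->
  2 * (rh P Q - r1) * rhat_dot P Q <= - (c ^ 2 * (a - rp) * eps / (c + lambda * Pmax)).
Proof.
  intros HP HR Hrpa Heps Hsmall Hfar.
  pose proof (denom_pos P (proj1 HP)). pose proof r1_pos. pose proof r1_lt_acoef.
  pose proof cc_pos.
  set (R := rh P Q) in *. set (X := R - r1) in *.
  set (B := c ^ 2 * (a - rp) * eps) in *.
  assert (HB : 0 <= B) by (unfold B; apply Rmult_le_pos; [apply Rmult_le_pos; [apply pow2_ge_0|]|]; lra).
  assert (Hfar' : B <= c ^ 2 * ((a - R) * X²)).
  { unfold B. rewrite Rmult_assoc. apply Rmult_le_compat_l; [apply pow2_ge_0|].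
    apply Rmult_le_compat; lra. }
  assert (HX : X * (1 - R) <= a * (1 + a)).
  { apply Rle_trans with (Rabs (X * (1 - R))); [apply Rle_abs|]. rewrite Rabs_mult.
    apply Rmult_le_compat; try apply Rabs_pos; apply Rabs_le; unfold X; lra. }
  assert (Hcross : 2 * X * P * R * (1 - R) <= 2 * a ^ 2 * (1 + a) * P).
  { assert (0 <= P * R) by nra. assert (P * R <= P * a) by (apply Rmult_le_compat_l; lra).
    assert (0 <= a * (1 + a)) by nra.
    replace (2 * X * P * R * (1 - R)) with (2 * (P * R) * (X * (1 - R))) by ring.
    apply Rle_trans with (2 * (P * R) * (a * (1 + a))); [apply Rmult_le_compat_l; lra|nra]. }
  replace (2 * X * rhat_dot P Q)
    with ((- 2 * (c ^ 2 * ((a - R) * X²)) + 2 * X * P * R * (1 - R)) / (c + lambda * P))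
    by (unfold rhat_dot; fold R; unfold X, Rsqr; field; apply denom_neq0, HP).
  apply Rle_trans with (- B / (c + lambda * P)).
  - unfold Rdiv. apply Rmult_le_compat_r; [left; apply Rinv_0_lt_compat; lra|lra].
  - unfold Rdiv. rewrite Ropp_mult_distr_l_reverse. apply Ropp_le_contravar.
    apply Rmult_le_compat_l; [exact HB|]. apply Rinv_le_contravar; [lra|].
    nra.
Qed.

Lemma rhat_lt_acoef P Q : inT alpha m lambda P Q -> (P, Q) <> (0, 0) -> rh P Q < a.
Proof.
  intros HT Hne. destruct (inT_bounds _ _ HT) as (HP & HQ & _ & Ha & _).
  destruct (Rle_lt_or_eq_dec _ _ Ha) as [Hlt|Heq]; [exact Hlt|]. exfalso.
  pose proof (q_eq P Q (denom_neq0 P HP)) as E. rewrite Heq in E.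
  assert (Halp : 0 < a * lambda) by (pose proof acoef_pos; nra).
  assert (E' : (a * lambda) * P = - Q) by (rewrite E; ring).
  assert (P <= 0) by nra.
  apply Hne. f_equal; nra.
Qed.

Definition r_mid : R := (Rmax 1 r1 + r_star) / 2.

Lemma r_mid_bounds : 1 < r_mid /\ r1 < r_mid /\ r_mid < r_star.
Proof.
  pose proof one_lt_r_star. pose proof r1_lt_r_star.
  pose proof (Rmax_l 1 r1). pose proof (Rmax_r 1 r1).
  assert (Rmax 1 r1 < r_star) by (apply Rmax_lub_lt; lra).
  unfold r_mid. lra.
Qed.

Section Convergence.
Variables p q : R -> R.
Hypothesis Hsol : is_global_solution alpha m lambda p q.
Hypothesis Hinit : inT alpha m lambda (p 0) (q 0).

Lemma global_in_T t : 0 <= t -> inT alpha m lambda (p t) (q t).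
Proof.
  intros Ht. destruct Hsol as [Hic Hder].
  apply (T_invariant (t + 1) p q); [|exact Hinit|lra]. split.
  - intros eps Heps. destruct (Hic eps Heps) as [d [Hd Hnear]].
    exists d. split; [exact Hd|]. intros s Hs _. apply Hnear, Hs.
  - intros s Hs. apply Hder. lra.
Qed.

Lemma global_bounds t : 0 <= t ->
  0 <= p t /\ 0 <= q t /\ rl <= rh (p t) (q t) /\ rh (p t) (q t) <= a /\ p t <= Pmax.
Proof. intros Ht. apply inT_bounds, global_in_T, Ht. Qed.

Lemma derivable_pt_lim_rhat_global t : 0 < t ->
  derivable_pt_lim (fun s => rh (p s) (q s)) t (rhat_dot (p t) (q t)).
Proof.
  intros Ht. destruct Hsol as [_ Hder]. destruct (Hder t Ht) as [Hp Hq].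
  apply derivable_pt_lim_rhat; [exact Hp|exact Hq|]. apply denom_neq0, global_bounds. lra.
Qed.

Hypothesis Hnonzero : (p 0, q 0) <> (0, 0).

Lemma rhat_lt_acoef_at_positive_time : exists t0, 0 < t0 /\ rh (p t0) (q t0) < a.
Proof.
  destruct (classic (exists t0, 0 < t0 /\ (p t0, q t0) <> (0, 0))) as [[t0 [Ht0 Hne]]|Hstay].
  - exists t0. split; [exact Ht0|].
    apply rhat_lt_acoef; [apply global_in_T; lra|exact Hne].
  - exfalso. destruct Hsol as [Hic _].
    (* the solution sits at the origin for [t > 0], hence also at [t = 0] by right continuity *)
    assert (Horigin : forall t, 0 < t -> p t = 0 /\ q t = 0).
    { intros t Ht. destruct (Req_dec (p t) 0) as [Ep|Ep]; [destruct (Req_dec (q t) 0) as [Eq|Eq]|];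
        [split; assumption| |]; exfalso; apply Hstay; exists t; split; [exact Ht| |exact Ht|];
        intros E; injection E; lra. }
    assert (Hsmall : forall eps, 0 < eps -> Rabs (p 0) < eps /\ Rabs (q 0) < eps).
    { intros eps Heps. destruct (Hic eps Heps) as [d [Hd Hnear]].
      destruct (Horigin (d / 2) ltac:(lra)) as [Ep Eq].
      destruct (Hnear (d / 2) ltac:(lra)) as [Hp Hq].
      rewrite Ep, Rminus_0_l, Rabs_Ropp in Hp. rewrite Eq, Rminus_0_l, Rabs_Ropp in Hq. lra. }
    apply Hnonzero. f_equal.
    + destruct (Req_dec (p 0) 0) as [E|E]; [exact E|].
      pose proof (Hsmall _ (Rabs_pos_lt _ E)). lra.
    + destruct (Req_dec (q 0) 0) as [E|E]; [exact E|].
      pose proof (Hsmall _ (Rabs_pos_lt _ E)). lra.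
Qed.

Lemma rhat_eventually_le rp : 1 <= rp -> r1 < rp ->
  exists T, 0 < T /\ forall t, T <= t -> rh (p t) (q t) <= rp.
Proof.
  intros H1 Hr1. destruct rhat_lt_acoef_at_positive_time as [t0 [Ht0 Ha0]].
  assert (Hd : forall t, t0 <= t -> derivable_pt_lim (fun s => rh (p s) (q s)) t (rhat_dot (p t) (q t)))
    by (intros; apply derivable_pt_lim_rhat_global; lra).
  destruct (classic (exists s, t0 <= s /\ rh (p s) (q s) <= rp)) as [[s [Hs Hs']]|Hno].
  - exists s. split; [lra|].
    apply (stays_le _ (fun t => rhat_dot (p t) (q t))); [intros; apply Hd; lra|exact Hs'|].
    intros t Ht Hgt. destruct (global_bounds t ltac:(lra)) as (HP & _ & _ & Ha & _).
    apply rhat_dot_nonpos; lra.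
  - exfalso.
    set (kappa := c ^ 2 * (rp - r1) / (c + lambda * Pmax)).
    assert (Hkappa : 0 < kappa).
    { pose proof Pmax_nonneg. pose proof (denom_pos _ Pmax_nonneg).
      apply Rdiv_lt_0_compat; [apply Rmult_lt_0_compat; [apply pow_lt, cc_pos|lra]|lra]. }
    destruct (unbounded_of_derivable_ge (fun t => a - rh (p t) (q t))
                (fun t => 0 - rhat_dot (p t) (q t)) kappa t0 a Hkappa ltac:(lra))
      as [t [Ht Hbig]].
    + intros t Ht. apply derivable_pt_lim_minus; [apply derivable_pt_lim_const|apply Hd, Ht].
    + intros t Ht. destruct (global_bounds t ltac:(lra)) as (HP & _ & _ & Ha & HPmax).
      assert (rp < rh (p t) (q t)) by (apply Rnot_le_lt; intros Hle; apply Hno; exists t; split; [lra|exact Hle]).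
      pose proof (rhat_dot_le (p t) (q t) rp (conj HP HPmax) H1 Hr1 ltac:(lra)). unfold kappa. lra.
    + destruct (global_bounds t ltac:(lra)) as (_ & _ & Hlow & _). pose proof r_low_bounds. lra.
Qed.

Lemma p_eventually_le eta : 0 < eta -> exists T, 0 < T /\ forall t, T <= t -> p t <= eta.
Proof.
  intros Heta. destruct r_mid_bounds as (H1 & Hr1 & Hstar).
  destruct (rhat_eventually_le r_mid ltac:(lra) Hr1) as [T1 [HT1 Hle]].
  (* [fp = fp_rate * p * (rhat - r_star) <= - mu * p] once [rhat <= r_mid] *)
  set (mu := fp_rate * (r_star - r_mid)).
  assert (Hmu : 0 < mu) by (pose proof fp_rate_pos; unfold mu; nra).
  destruct (exp_decay_eventually_le Pmax mu eta T1 Pmax_nonneg Hmu Heta) as [T [HT Hdecay]].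
  exists T. split; [lra|]. intros t Ht.
  apply Rle_trans with (Pmax * exp (- mu * (t - T1))); [|apply Hdecay, Ht].
  destruct (global_bounds T1 ltac:(lra)) as (HP1 & _ & _ & _ & HPmax1).
  apply Rle_trans with (p T1 * exp (- mu * (t - T1)));
    [|apply Rmult_le_compat_r; [left; apply exp_pos|exact HPmax1]].
  destruct (Rle_lt_or_eq_dec T1 t ltac:(lra)) as [Hlt|<-].
  - destruct Hsol as [_ Hder].
    apply (gronwall_upper p (fun s => fp alpha m lambda (p s) (q s))); [exact Hlt| | |].
    + eapply derivable_pt_lim_right_continuous, Hder. lra.
    + intros s Hs. apply Hder. lra.
    + intros s Hs. destruct (global_bounds s ltac:(lra)) as (HP & _).
      rewrite fp_eq by (apply denom_neq0, HP).
      pose proof fp_rate_pos. assert (rh (p s) (q s) <= r_mid) by (apply Hle; lra).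
      assert (0 <= fp_rate * p s * (r_mid - rh (p s) (q s)))
        by (apply Rmult_le_pos; [apply Rmult_le_pos|]; lra).
      unfold mu. lra.
  - replace (- mu * (T1 - T1)) with 0 by ring. rewrite exp_0. lra.
Qed.

Lemma rhat_eventually_near_r1 eps : 0 < eps ->
  exists T, 0 < T /\ forall t, T <= t -> (rh (p t) (q t) - r1)² <= eps.
Proof.
  intros Heps. destruct r_mid_bounds as (H1 & Hr1 & Hstar). pose proof r_star_lt_acoef.
  pose proof acoef_pos. pose proof cc_pos. pose proof (denom_pos _ Pmax_nonneg).
  destruct (rhat_eventually_le r_mid ltac:(lra) Hr1) as [T1 [HT1 Hle]].
  set (eta := c ^ 2 * (a - r_mid) * eps / (2 * a ^ 2 * (1 + a))).
  assert (Heta : 0 < eta).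
  { unfold eta. apply Rdiv_lt_0_compat.
    - apply Rmult_lt_0_compat; [apply Rmult_lt_0_compat; [apply pow_lt|]|]; lra.
    - apply Rmult_lt_0_compat; [apply Rmult_lt_0_compat; [|apply pow_lt]|]; lra. }
  destruct (p_eventually_le eta Heta) as [T2 [HT2 Hsmall]].
  set (T := Rmax T1 T2). assert (T1 <= T) by apply Rmax_l. assert (T2 <= T) by apply Rmax_r.
  destruct (eventually_le_of_derivable (fun t => (rh (p t) (q t) - r1)²)
              (fun t => 2 * (rh (p t) (q t) - r1) * rhat_dot (p t) (q t))
              eps (c ^ 2 * (a - r_mid) * eps / (c + lambda * Pmax)) T)
    as [T' [HT' Hfin]].
  - apply Rdiv_lt_0_compat; [|lra]. apply Rmult_lt_0_compat; [apply Rmult_lt_0_compat; [apply pow_lt|]|]; lra.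
  - intros t Ht.
    pose proof (derivable_pt_lim_minus _ (fun _ => r1) t _ _
                  (derivable_pt_lim_rhat_global t ltac:(lra)) (derivable_pt_lim_const r1 t)) as Hd.
    replace (2 * (rh (p t) (q t) - r1) * rhat_dot (p t) (q t))
      with ((rhat_dot (p t) (q t) - 0) * (rh (p t) (q t) - r1) + (rh (p t) (q t) - r1) * (rhat_dot (p t) (q t) - 0))
      by ring.
    exact (derivable_pt_lim_mult _ _ t _ _ Hd Hd).
  - intros t Ht. apply Rle_0_sqr.
  - intros t Ht Hfar. destruct (global_bounds t ltac:(lra)) as (HP & _ & Hlow & _ & HPmax).
    pose proof r_low_bounds as (Hrl & _).
    apply rhat_dist_r1_deriv_le; try split; try lra; [apply Hle; lra|].
    assert (p t <= eta) by (apply Hsmall; lra).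
    assert (E : 2 * a ^ 2 * (1 + a) * eta = c ^ 2 * (a - r_mid) * eps) by (unfold eta; field; lra).
    assert (0 < 2 * a ^ 2 * (1 + a)) by (apply Rmult_lt_0_compat; [apply Rmult_lt_0_compat; [|apply pow_lt]|]; lra).
    rewrite <- E. apply Rmult_le_compat_l; lra.
  - exists T'. split; [lra|exact Hfin].
Qed.

Lemma converges_to_0_1 : converges_to p q 0 1.
Proof.
  intros eps Heps. pose proof cc_pos. pose proof acoef_pos.
  set (z := eps / (4 * c)).
  assert (Hz : 0 < z) by (unfold z; apply Rdiv_lt_0_compat; lra).
  destruct (rhat_eventually_near_r1 z² ltac:(unfold Rsqr; nra)) as [T1 [HT1 Hnear]].
  set (eta := Rmin (eps / 2) (eps / (4 * lambda * a))).
  assert (Heta : 0 < eta)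
    by (apply Rmin_pos; [lra|apply Rdiv_lt_0_compat; [lra|apply Rmult_lt_0_compat; nra]]).
  destruct (p_eventually_le eta Heta) as [T2 [HT2 Hsmall]].
  exists (Rmax T1 T2). intros t Ht.
  pose proof (Rmax_l T1 T2). pose proof (Rmax_r T1 T2).
  destruct (global_bounds t ltac:(lra)) as (HP & _ & Hlow & Ha & _).
  pose proof r_low_bounds as (Hrl & _).
  assert (Hpt : p t <= eta) by (apply Hsmall; lra).
  assert (Heta1 : eta <= eps / 2) by apply Rmin_l.
  assert (Heta2 : eta <= eps / (4 * lambda * a)) by apply Rmin_r.
  split.
  - rewrite Rminus_0_r, Rabs_right; lra.
  - rewrite (q_sub_1_eq _ _ (denom_neq0 _ HP)).
    assert (Hr : Rabs (rh (p t) (q t) - r1) <= z)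
      by (rewrite <- (Rabs_right z) by lra; apply Rsqr_le_abs_0, Hnear; lra).
    assert (Hfirst : Rabs (c * (r1 - rh (p t) (q t))) <= eps / 4).
    { rewrite Rabs_mult, Rabs_right, <- Rabs_Ropp by lra.
      replace (- (r1 - rh (p t) (q t))) with (rh (p t) (q t) - r1) by ring.
      replace (eps / 4) with (c * z) by (unfold z; field; lra).
      apply Rmult_le_compat_l; lra. }
    assert (Hsecond : 0 <= lambda * p t * rh (p t) (q t) <= eps / 4).
    { split; [apply Rmult_le_pos; [apply Rmult_le_pos|]; lra|].
      replace (eps / 4) with (lambda * (eps / (4 * lambda * a)) * a) by (field; lra).
      apply Rmult_le_compat; [apply Rmult_le_pos; lra|lra|apply Rmult_le_compat_l; lra|exact Ha]. }
    pose proof (Rabs_triang (c * (r1 - rh (p t) (q t))) (- (lambda * p t * rh (p t) (q t)))) as Htri.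
    rewrite Rabs_Ropp, (Rabs_right (lambda * p t * rh (p t) (q t))) in Htri by lra.
    unfold Rminus at 1. lra.
Qed.

End Convergence.

End Triangle.

Theorem lemma7p1 (alpha m lambda : R) :
  0 < alpha -> -1 < m -> m < alpha ->
  0 < lambda -> lambda < 2 * (alpha - m) / (1 + m) ->
  (forall (tau : R) (p q : R -> R),
     is_solution_on alpha m lambda tau p q ->
     inT alpha m lambda (p 0) (q 0) ->
     forall t, 0 <= t < tau -> inT alpha m lambda (p t) (q t)) /\
  (forall (p q : R -> R),
     is_global_solution alpha m lambda p q ->
     inT alpha m lambda (p 0) (q 0) ->
     (p 0, q 0) <> (0, 0) ->
     converges_to p q 0 1).
Proof.
  intros Halpha Hm Hmalpha Hlambda Hlambda_lt. split.
  - exact (T_invariant alpha m lambda Halpha Hm Hmalpha Hlambda Hlambda_lt).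
  - exact (converges_to_0_1 alpha m lambda Halpha Hm Hmalpha Hlambda Hlambda_lt).
Qed.
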